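(* Let $n,m,\ell\in\mathbb{N}_0$, let $U_{\mathrm{pos}}\subset\mathbb{R}^n$ be open, let $A:U_{\mathrm{pos}}\to\mathbb{R}^{\ell\times n}$ and $B:U_{\mathrm{pos}}\to\mathbb{R}^{n\times m}$ be continuous, and assume that $A$ has constant rank on $U_{\mathrm{pos}}$. For $\bm{r}\in U_{\mathrm{pos}}$ let $\mathcal{D}_{\bm{r}}\subset\mathbb{R}^{3n+m}\times\mathbb{R}^{3n+m}$ be the set of all pairs of a flow $f=(\bm{v}_{\mathcal{L},f},\bm{F}_{\mathcal{L},f},\bm{v}_{\mathcal{R}},\bm{v}_{\mathrm{ext}})\in\mathbb{R}^n\times\mathbb{R}^n\times\mathbb{R}^n\times\mathbb{R}^m$ and an effort $e=(\bm{F}_{\mathcal{L},e},\bm{v}_{\mathcal{L},e},\bm{F}_{\mathcal{R}},\bm{F}_{\mathrm{ext}})\in\mathbb{R}^n\times\mathbb{R}^n\times\mathbb{R}^n\times\mathbb{R}^m$ such that $\bm{v}_{\mathcal{L},f}=\bm{v}_{\mathcal{L},e}=\bm{v}_{\mathcal{R}}$, $A(\bm{r})\bm{v}_{\mathcal{L},e}=0$, $\bm{v}_{\mathrm{ext}}=B(\bm{r})^\top\bm{v}_{\mathcal{L},e}$, and there exists $\bm{\mu}\in\mathbb{R}^\ell$ with $\bm{F}_{\mathcal{L},f}+\bm{F}_{\mathcal{L},e}+\bm{F}_{\mathcal{R}}+B(\bm{r})\bm{F}_{\mathrm{ext}}+A(\bm{r})^\top\bm{\mu}=0$. Then the family $(\mathcal{D}_{\bm{r}})_{\bm{r}\in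 U_{\mathrm{pos}}}$ is a modulated Dirac structure.
   Context: A subspace $\mathcal{D}\subset\mathbb{R}^N\times\mathbb{R}^N$ is a Dirac structure if for all $f,e\in\mathbb{R}^N$: $(f,e)\in\mathcal{D}$ if and only if $\hat f^\top e+f^\top\hat e=0$ for all $(\hat f,\hat e)\in\mathcal{D}$. For $U\subset\mathbb{R}^k$ open, a family $(\mathcal{D}_x)_{x\in U}$ of subspaces of $\mathbb{R}^N\times\mathbb{R}^N$ is a modulated Dirac structure if for every $x\in U$: (a) $\mathcal{D}_x$ is a Dirac structure, and (b) there exist a neighborhood $U_x\subset U$ of $x$ and a family $(T_y)_{y\in U_x}$ of linear bijective maps $T_y:\mathbb{R}^N\to\mathcal{D}_y$ such that for every $z\in\mathbb{R}^N$ the map $y\mapsto T_yz$ from $U_x$ to $\mathbb{R}^N\times\mathbb{R}^N$ is continuous. *)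

From mathcomp Require Import all_boot all_algebra.
From mathcomp Require Import all_classical all_reals all_analysis.
Set Implicit Arguments. Unset Strict Implicit. Unset Printing Implicit Defensive.
Import GRing.Theory Num.Theory numFieldNormedType.Exports.
Local Open Scope ring_scope.
Local Open Scope classical_set_scope.

Definition is_subspace (R : realType) (N : nat)
    (D : set ('cV[R]_N * 'cV[R]_N)) : Prop :=
  D 0 /\ forall (a : R) p q, D p -> D q -> D (a *: p + q).

Definition Dirac_structure (R : realType) (N : nat)
    (D : set ('cV[R]_N * 'cV[R]_N)) : Prop :=
  is_subspace D /\
  forall f e : 'cV[R]_N,
    D (f, e) <->
    (forall fh eh : 'cV[R]_N, D (fh, eh) -> fh^T *m e + f^T *m eh = 0).

Definition lin_bij_onto (R : realType) (N : nat)
    (T : 'cV[R]_N -> 'cV[R]_N * 'cV[R]_N)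
    (D : set ('cV[R]_N * 'cV[R]_N)) : Prop :=
  (forall (a : R) u v, T (a *: u + v) = a *: T u + T v) /\
  injective T /\
  (forall p, D p <-> exists z, T z = p).

Definition modulated_Dirac (R : realType) (k N : nat) (U : set 'cV[R]_k)
    (D : 'cV[R]_k -> set ('cV[R]_N * 'cV[R]_N)) : Prop :=
  forall x, U x ->
    Dirac_structure (D x) /\
    exists (Ux : set 'cV[R]_k) (T : 'cV[R]_k -> 'cV[R]_N -> 'cV[R]_N * 'cV[R]_N),
      open Ux /\ Ux x /\ Ux `<=` U /\
      (forall y, Ux y -> lin_bij_onto (T y) (D y)) /\
      (forall z, {within Ux, continuous (fun y => T y z)}).

(* The family D_r from the statement; R^{3n+m} is represented as
   'cV_(n + n + n + m), a flow/effort being the stacked column of its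
   four components. *)
Definition Dmech (R : realType) (n m l : nat)
    (A : 'cV[R]_n -> 'M[R]_(l, n)) (B : 'cV[R]_n -> 'M[R]_(n, m))
    (r : 'cV[R]_n) : set ('cV[R]_(n + n + n + m) * 'cV[R]_(n + n + n + m)) :=
  fun fe =>
    exists (vLf FLf vR : 'cV[R]_n) (vext : 'cV[R]_m)
           (FLe vLe FR : 'cV[R]_n) (Fext : 'cV[R]_m),
      fe.1 = col_mx (col_mx (col_mx vLf FLf) vR) vext /\
      fe.2 = col_mx (col_mx (col_mx FLe vLe) FR) Fext /\
      vLf = vLe /\ vLe = vR /\
      A r *m vLe = 0 /\
      vext = (B r)^T *m vLe /\
      exists mu : 'cV[R]_l,
        FLf + FLe + FR + B r *m Fext + (A r)^T *m mu = 0.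

(* Parametrise D_r by a velocity v with A(r) v = 0 and forces satisfying the
   balance law.  The power pairing of two such elements is
   -(A(r) v)^T mu' - (A(r) v')^T mu = 0, so D_r is isotropic; pairing a
   candidate (f, e) against suitable elements of D_r forces it into the same
   form, so D_r is a Dirac structure.
   On an isotropic subspace (f, e) |-> f - e is injective, so a linear map
   z |-> (f(z), f(z) - z) into D_r is automatically a bijection onto D_r.
   Such a map comes from solving for v in a saddle-point system whose
   constraint block is L A(r), with L chosen at the base point so that
   L A(r) has full row rank there.  Invertibility of the saddle matrix is an
   open condition that keeps L A(r) of full row rank, hence (constant rank)
   with the row space of A(r), and its inverse depends continuously on r. *)

From mathcomp Require Import all_boot all_algebra.
From mathcomp Require Import all_classical all_reals all_analysis.
From mathcomp Require Import ring.
Set Implicit Arguments. Unset Strict Implicit. Unset Printing Implicit Defensive.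
Import GRing.Theory Num.Theory numFieldNormedType.Exports.
Local Open Scope ring_scope.
Local Open Scope classical_set_scope.

Section MatrixLimits.
Context {K : numFieldType} {T : Type} (F : set_system T) {FF : Filter F}.

Lemma cvg_mxP p q (f : T -> 'M[K]_(p, q)) (a : 'M[K]_(p, q)) :
  f x @[x --> F] --> a <-> forall i j, f x i j @[x --> F] --> a i j.
Proof.
split=> [fa i j | fa].
  exact: (cvg_comp _ _ fa (@coord_continuous K p q i j a)).
apply/cvg_mx_entourageP => E entE.
apply: filter_forall => i; apply: filter_forall => j.
have /cvg_entourageP/(_ E entE) := fa i j.
by rewrite !near_simpl; apply: filterS => x; rewrite /= inE.
Qed.

Lemma cvg_mulmx p q s (f : T -> 'M[K]_(p, q)) (g : T -> 'M[K]_(q, s))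
    (a : 'M[K]_(p, q)) (b : 'M[K]_(q, s)) :
  f x @[x --> F] --> a -> g x @[x --> F] --> b ->
  f x *m g x @[x --> F] --> a *m b.
Proof.
move=> /cvg_mxP fa /cvg_mxP gb; apply/cvg_mxP => i j.
under eq_fun => x do rewrite mxE; rewrite mxE.
by apply: cvg_big => [|k _]; [exact: add_continuous | exact: cvgM].
Qed.

Lemma cvg_trmx p q (f : T -> 'M[K]_(p, q)) (a : 'M[K]_(p, q)) :
  f x @[x --> F] --> a -> (f x)^T @[x --> F] --> a^T.
Proof.
move=> /cvg_mxP fa; apply/cvg_mxP => i j.
by under eq_fun => x do rewrite mxE; rewrite mxE; apply: fa.
Qed.

Lemma cvg_col_mx p1 p2 q (f : T -> 'M[K]_(p1, q)) (g : T -> 'M[K]_(p2, q))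
    (a : 'M[K]_(p1, q)) (b : 'M[K]_(p2, q)) :
  f x @[x --> F] --> a -> g x @[x --> F] --> b ->
  col_mx (f x) (g x) @[x --> F] --> col_mx a b.
Proof.
move=> /cvg_mxP fa /cvg_mxP gb; apply/cvg_mxP => i j.
rewrite -(fintype.splitK i); case: (fintype.split i) => k /=.
  by under eq_fun => x do rewrite col_mxEu; rewrite col_mxEu; apply: fa.
by under eq_fun => x do rewrite col_mxEd; rewrite col_mxEd; apply: gb.
Qed.

Lemma cvg_row_mx p q1 q2 (f : T -> 'M[K]_(p, q1)) (g : T -> 'M[K]_(p, q2))
    (a : 'M[K]_(p, q1)) (b : 'M[K]_(p, q2)) :
  f x @[x --> F] --> a -> g x @[x --> F] --> b ->
  row_mx (f x) (g x) @[x --> F] --> row_mx a b.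
Proof.
move=> fa gb; rewrite -[row_mx a b]trmxK tr_row_mx.
under eq_fun => x do rewrite -[row_mx _ _]trmxK tr_row_mx.
by apply/cvg_trmx/cvg_col_mx; apply: cvg_trmx.
Qed.

Lemma cvg_block_mx p1 p2 q1 q2
    (f1 : T -> 'M[K]_(p1, q1)) (f2 : T -> 'M[K]_(p1, q2))
    (f3 : T -> 'M[K]_(p2, q1)) (f4 : T -> 'M[K]_(p2, q2))
    (a1 : 'M[K]_(p1, q1)) (a2 : 'M[K]_(p1, q2))
    (a3 : 'M[K]_(p2, q1)) (a4 : 'M[K]_(p2, q2)) :
  f1 x @[x --> F] --> a1 -> f2 x @[x --> F] --> a2 ->
  f3 x @[x --> F] --> a3 -> f4 x @[x --> F] --> a4 ->
  block_mx (f1 x) (f2 x) (f3 x) (f4 x) @[x --> F] --> block_mx a1 a2 a3 a4.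
Proof.
move=> fa1 fa2 fa3 fa4; rewrite block_mxEv.
under eq_fun => x do rewrite block_mxEv.
by apply: cvg_col_mx; apply: cvg_row_mx.
Qed.

Lemma cvg_usubmx p1 p2 q (f : T -> 'M[K]_(p1 + p2, q)) (a : 'M[K]_(p1 + p2, q)) :
  f x @[x --> F] --> a -> usubmx (f x) @[x --> F] --> usubmx a.
Proof.
move=> /cvg_mxP fa; apply/cvg_mxP => i j.
by under eq_fun => x do rewrite mxE; rewrite mxE; apply: fa.
Qed.

Lemma cvg_det p (f : T -> 'M[K]_p) (a : 'M[K]_p) :
  f x @[x --> F] --> a -> \det (f x) @[x --> F] --> \det a.
Proof.
move=> /cvg_mxP fa; apply: cvg_big => [|s _]; first exact: add_continuous.
apply: cvgM; first exact: cvg_cst.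
by apply: cvg_big => [|i _]; [exact: mul_continuous | exact: fa].
Qed.

Lemma cvg_adj p (f : T -> 'M[K]_p) (a : 'M[K]_p) :
  f x @[x --> F] --> a -> \adj (f x) @[x --> F] --> \adj a.
Proof.
move=> fa; apply/cvg_mxP => i j.
under eq_fun => x do rewrite mxE; rewrite mxE.
apply: cvgM; first exact: cvg_cst.
apply/cvg_det/cvg_mxP => k l; move/cvg_mxP: fa => fa.
by under eq_fun => x do rewrite !mxE; rewrite !mxE; apply: fa.
Qed.

Lemma cvg_invmx p (f : T -> 'M[K]_p) (a : 'M[K]_p) : a \in unitmx ->
  f x @[x --> F] --> a -> invmx (f x) @[x --> F] --> invmx a.
Proof.
move=> a_unit fa; have a0 : \det a != 0 by rewrite -unitfE -unitmxE.
have near_unit : \forall x \near F, f x \in unitmx.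
  by apply: filterS (cvgr_neq0 _ (cvg_det fa) a0) => x; rewrite unitmxE unitfE.
apply: (@cvg_trans _ (((\det (f x))^-1 *: \adj (f x)) @[x --> F])).
  apply: near_eq_cvg; apply: filterS near_unit => x fx_unit.
  by rewrite /invmx fx_unit.
rewrite /invmx a_unit.
by apply: cvgZ; [exact: cvgV (cvg_det fa) | exact: cvg_adj].
Qed.

End MatrixLimits.

Lemma open_unitmx_preimage {K : numFieldType} {X : topologicalType} p (U : set X)
    (g : X -> 'M[K]_p) :
  open U -> {in U, continuous g} -> open [set y | U y /\ g y \in unitmx].
Proof.
move=> U_open g_cont; rewrite openE => y [Uy gy_unit].
have gy0 : \det (g y) != 0 by rewrite -unitfE -unitmxE.
have gy_cont : {for y, continuous g} by apply: g_cont; rewrite inE.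
have det_near : \forall w \near y, \det (g w) != 0.
  exact: cvgr_neq0 (cvg_det gy_cont) gy0.
have U_near : nbhs y U by move: U_open; rewrite openE; apply.
apply: (filterS2 _ _ U_near det_near) => w Uw gw0.
by split; rewrite // unitmxE unitfE.
Qed.

Lemma mulmx_trC {R : comPzRingType} p (u w : 'cV[R]_p) : u^T *m w = w^T *m u.
Proof.
by rewrite -[LHS]trmxK trmx_mul trmxK; apply/matrixP => i j; rewrite !ord1 mxE.
Qed.

Section RowSquares.
Context {R : realDomainType} (p : nat).

Lemma mulmx_trr_ge0 (a : 'rV[R]_p) : 0 <= (a *m a^T) 0 0.
Proof. by rewrite mxE sumr_ge0 // => i _; rewrite mxE -expr2 sqr_ge0. Qed.

Lemma mulmx_trr_eq0 (a : 'rV[R]_p) : ((a *m a^T) 0 0 == 0) = (a == 0).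
Proof.
apply/idP/eqP => [|->]; last by rewrite mul0mx mxE.
rewrite mxE psumr_eq0 => [/allP a0|i _]; last by rewrite mxE -expr2 sqr_ge0.
apply/rowP => i; have /(_ (mem_index_enum i)) := a0 i.
by rewrite mxE -expr2 sqrf_eq0 mxE => /eqP.
Qed.

Lemma trmx_mulmx_self_eq0 (u : 'cV[R]_p) : u^T *m u = 0 -> u = 0.
Proof.
by move=> uu; apply/trmx_inj/eqP; rewrite trmx0 -mulmx_trr_eq0 trmxK uu mxE.
Qed.

End RowSquares.

Lemma orthogonal_ker_submx {R : fieldType} k p (A : 'M[R]_(k, p)) (u : 'cV[R]_p) :
  (forall w : 'cV[R]_p, A *m w = 0 -> w^T *m u = 0) -> (u^T <= A)%MS.
Proof.
move=> u_orth; pose N := kermx A^T.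
have Nu : N *m u = 0.
  apply/row_matrixP => i; rewrite row_mul row0 -[row i N]trmxK u_orth //.
  by apply/trmx_inj; rewrite trmx_mul trmxK -row_mul mulmx_ker row0 trmx0.
have A_N : (A <= kermx N^T)%MS.
  by apply/sub_kermxP; rewrite -[A]trmxK -trmx_mul mulmx_ker trmx0.
have N_A : (kermx N^T <= A)%MS.
  rewrite -(mxrank_leqif_sup A_N).2 mxrank_ker mxrank_tr mxrank_ker mxrank_tr.
  by rewrite subKn ?rank_leq_col.
by apply: submx_trans N_A; apply/sub_kermxP; rewrite -trmx_mul Nu trmx0.
Qed.

Lemma eqmx_row_free_mulmx {R : fieldType} k l n
    (L : 'M[R]_(k, l)) (M : 'M[R]_(l, n)) :
  row_free (L *m M) -> \rank M = k -> (L *m M == M)%MS.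
Proof.
move=> LM_free rkM; rewrite /eqmx submxMl /=.
by rewrite -(mxrank_leqif_sup (submxMl L M)).2 rkM.
Qed.

Section SaddleMatrix.
Context {R : fieldType} (n k : nat).

Definition saddle_mx (S : 'M[R]_n) (C : 'M[R]_(k, n)) : 'M[R]_(n + k) :=
  block_mx S C^T C 0.

Lemma saddle_mx_unit_row_free S C : saddle_mx S C \in unitmx -> row_free C.
Proof.
move=> M_unit; rewrite -kermx_eq0; apply/eqP/row_matrixP => i; rewrite row0.
set b := row i _; have bC0 : b *m C = 0 by rewrite -row_mul mulmx_ker row0.
have : row_mx 0 b *m saddle_mx S C = 0.
  by rewrite mul_row_block !mul0mx mulmx0 bC0 !addr0 row_mx0.
by move/(canRL (mulmxK M_unit)); rewrite mul0mx -row_mx0 => /eq_row_mx [].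
Qed.

Lemma saddle_mx_solve S C q (c : 'M[R]_(n, q)) :
  saddle_mx S C \in unitmx ->
  let w := invmx (saddle_mx S C) *m col_mx c 0 in
  S *m usubmx w + C^T *m dsubmx w = c /\ C *m usubmx w = 0.
Proof.
move=> M_unit w; have : saddle_mx S C *m w = col_mx c 0 by rewrite mulKVmx.
rewrite -{1}[w]vsubmxK mul_block_col mul0mx addr0 => /eq_col_mx [Sc C0].
by rewrite Sc C0.
Qed.

End SaddleMatrix.

Section PositiveDefinite.
Context {R : realFieldType} (n : nat).

Definition posdef_mx (S : 'M[R]_n) :=
  forall a : 'rV[R]_n, a != 0 -> 0 < (a *m S *m a^T) 0 0.

Lemma posdef_scalar_add_gram (c : R) q (G : 'M[R]_(n, q)) :
  0 < c -> posdef_mx (c%:M + G *m G^T).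
Proof.
move=> c_gt0 a a_neq0.
rewrite mulmxDr mul_mx_scalar mulmxDl -scalemxAl mulmxA -mulmxA -trmx_mul.
have -> : (c *: (a *m a^T) + a *m G *m (a *m G)^T) 0 0 =
    c * (a *m a^T) 0 0 + (a *m G *m (a *m G)^T) 0 0 by rewrite !mxE.
have aa_gt0 : 0 < (a *m a^T) 0 0.
  by rewrite lt0r mulmx_trr_eq0 a_neq0 mulmx_trr_ge0.
by rewrite ltr_pwDl ?mulr_gt0 ?mulmx_trr_ge0.
Qed.

Lemma saddle_mx_unit k S (C : 'M[R]_(k, n)) :
  posdef_mx S -> row_free C -> saddle_mx S C \in unitmx.
Proof.
move=> S_pos C_free; rewrite -row_free_unit -kermx_eq0.
apply/eqP/row_matrixP => i; rewrite row0; set u := row i _.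
have : u *m saddle_mx S C = 0 by rewrite -row_mul mulmx_ker row0.
rewrite -[u]hsubmxK mul_row_block mulmx0 addr0 -row_mx0.
case/eq_row_mx; set a := lsubmx u; set b := rsubmx u => ab0 aC0.
have a0 : a = 0.
  apply/eqP; apply: contraT => /S_pos; rewrite lt0r => /andP [+ _].
  have -> : a *m S *m a^T = - (b *m (C *m a^T)).
    by apply/eqP; rewrite -addr_eq0 mulmxA -mulmxDl ab0 mul0mx.
  by rewrite -[C *m a^T]trmxK trmx_mul trmxK aC0 trmx0 mulmx0 oppr0 mxE eqxx.
have b0 : b = 0.
  by apply/(row_free_inj C_free); rewrite mul0mx -ab0 a0 mul0mx add0r.
by rewrite a0 b0 row_mx0.
Qed.

End PositiveDefinite.

Section IsotropicSubspaces.
Context {R : realType} (N : nat).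
Implicit Types D : set ('cV[R]_N * 'cV[R]_N).

Definition isotropic D :=
  forall p q, D p -> D q -> q.1^T *m p.2 + p.1^T *m q.2 = 0.

Lemma isotropic_diag_eq0 D u : isotropic D -> D (u, u) -> u = 0.
Proof.
move=> D_iso Duu; apply: trmx_mulmx_self_eq0; apply/eqP.
have := D_iso _ _ Duu Duu; rewrite -mulr2n -scaler_nat => /eqP.
by rewrite scaler_eq0 pnatr_eq0.
Qed.

Lemma lin_bij_onto_diff_section D (P Q : 'M[R]_N) :
  is_subspace D -> isotropic D -> P - Q = 1%:M ->
  (forall z, D (P *m z, Q *m z)) ->
  lin_bij_onto (fun z => (P *m z, Q *m z)) D.
Proof.
move=> [_ D_lin] D_iso PQ1 DPQ; split; [|split].
- by move=> a z w; rewrite !mulmxDr -!scalemxAr.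
- move=> z w [Pzw Qzw].
  by rewrite -[z]mul1mx -[w]mul1mx -PQ1 !mulmxBl Pzw Qzw.
move=> [f e]; split => [Dfe | [z [<- <-]] //].
exists (f - e); set z := f - e.
have Dw : D ((-1) *: (f, e) + (P *m z, Q *m z)) := D_lin _ _ _ Dfe (DPQ z).
rewrite scaleN1r addrC in Dw; change (D (P *m z - f, Q *m z - e)) in Dw.
have Pz_Qz : Q *m z - e = P *m z - f.
  rewrite -[P](subrK Q) PQ1 mulmxDl mul1mx addrAC [Q *m z - e]addrC.
  by congr (_ + _); rewrite /z addrAC subrr add0r.
rewrite Pz_Qz in Dw; have Pzf := isotropic_diag_eq0 D_iso Dw.
by congr pair; apply/eqP; rewrite -subr_eq0 ?Pz_Qz Pzf.
Qed.

End IsotropicSubspaces.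

Notation col4 a b c d := (col_mx (col_mx (col_mx a b) c) d).

Lemma col4_split {R : Type} p1 p2 p3 p4 (u : 'cV[R]_(p1 + p2 + p3 + p4)) :
  exists a b c d, u = col4 a b c d.
Proof.
by exists (usubmx (usubmx (usubmx u))), (dsubmx (usubmx (usubmx u))),
  (dsubmx (usubmx u)), (dsubmx u); rewrite !vsubmxK.
Qed.

Section MechanicalDirac.
Context {R : realType} (n m l : nat) (A : 'cV[R]_n -> 'M[R]_(l, n))
  (B : 'cV[R]_n -> 'M[R]_(n, m)) (r : 'cV[R]_n).

Definition mech_pair (v a b c : 'cV[R]_n) (d : 'cV[R]_m) :=
  (col4 v a v ((B r)^T *m v), col4 b v c d).

Lemma DmechP fe : Dmech A B r fe <->
  exists v a b c d (mu : 'cV[R]_l), fe = mech_pair v a b c d /\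
    A r *m v = 0 /\ a + b + c + B r *m d + (A r)^T *m mu = 0.
Proof.
case: fe => f e; split.
  case=> vLf [a [vR [vext [b [v [c [d]]]]]]].
  case=> /= -> [/= -> [-> [<- [Av0 [-> [mu bal]]]]]].
  by exists v, a, b, c, d, mu.
case=> v [a [b [c [d [mu [[-> ->] [Av0 bal]]]]]]].
by exists v, a, v, ((B r)^T *m v), b, v, c, d; do 6 split => //; exists mu.
Qed.

Lemma mech_pair_Dmech v a b c d (mu : 'cV[R]_l) :
  A r *m v = 0 -> a + b + c + B r *m d + (A r)^T *m mu = 0 ->
  Dmech A B r (mech_pair v a b c d).
Proof. by move=> Av0 bal; apply/DmechP; exists v, a, b, c, d, mu. Qed.

Lemma mech_pairing v a b c d (f1 f2 f3 e1 e2 e3 : 'cV[R]_n) (f4 e4 : 'cV[R]_m) :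
  (mech_pair v a b c d).1^T *m col4 e1 e2 e3 e4 +
    (col4 f1 f2 f3 f4)^T *m (mech_pair v a b c d).2 =
  v^T *m (f2 + e1 + e3 + B r *m e4) +
    (a^T *m e2 + b^T *m f1 + c^T *m f3 + d^T *m f4).
Proof.
rewrite /= !tr_col_mx !mul_row_col trmx_mul trmxK -mulmxA.
rewrite (mulmx_trC f1) (mulmx_trC f2) (mulmx_trC f3) (mulmx_trC f4) !mulmxDr.
apply/matrixP => i j; rewrite !mxE; ring.
Qed.

Lemma Dmech_subspace : is_subspace (Dmech A B r).
Proof.
split.
  apply/DmechP; exists 0, 0, 0, 0, 0, 0.
  by rewrite /mech_pair !mulmx0 !col_mx0 !addr0.
move=> k p q /DmechP [v [a [b [c [d [mu [-> [Av0 bal]]]]]]]].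
move=> /DmechP [v' [a' [b' [c' [d' [mu' [-> [Av0' bal']]]]]]]].
apply/DmechP; exists (k *: v + v'), (k *: a + a'), (k *: b + b'), (k *: c + c').
exists (k *: d + d'), (k *: mu + mu'); split; last split.
- apply: injective_projections; rewrite /= !scale_col_mx !add_col_mx //.
  by rewrite mulmxDr -scalemxAr.
- by rewrite mulmxDr -scalemxAr Av0 Av0' scaler0 addr0.
rewrite -[RHS](addr0 0) -{1}(scaler0 _ k) -{1}bal -bal' !mulmxDr -!scalemxAr.
apply/matrixP => i j; rewrite !mxE; ring.
Qed.

Lemma Dmech_isotropic : isotropic (Dmech A B r).
Proof.
move=> p q /DmechP [v [a [b [c [d [mu [-> [Av0 bal]]]]]]]].
move=> /DmechP [w [a' [b' [c' [d' [mu' [-> [Aw0 bal']]]]]]]].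
have forces_eq x y z (t : 'cV[R]_m) nu :
    x + y + z + B r *m t + (A r)^T *m nu = 0 ->
    x + y + z + B r *m t = - ((A r)^T *m nu).
  by move=> bal0; apply/eqP; rewrite -addr_eq0 bal0.
rewrite mech_pairing (forces_eq _ _ _ _ _ bal).
have -> : a'^T *m v + b'^T *m v + c'^T *m v + d'^T *m ((B r)^T *m v) =
    (a' + b' + c' + B r *m d')^T *m v.
  by rewrite !linearD /= !mulmxDl trmx_mul mulmxA.
rewrite (forces_eq _ _ _ _ _ bal') mulmxN mulmxA -trmx_mul Aw0 trmx0 mul0mx oppr0.
by rewrite add0r linearN /= trmx_mul trmxK mulNmx -mulmxA Av0 mulmx0 oppr0.
Qed.

Section Orthogonal.
Variables (f1 f2 f3 e1 e2 e3 : 'cV[R]_n) (f4 e4 : 'cV[R]_m).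
Hypothesis fe_orth : forall fh eh, Dmech A B r (fh, eh) ->
  fh^T *m col4 e1 e2 e3 e4 + (col4 f1 f2 f3 f4)^T *m eh = 0.

Lemma orth_mech_pair v a b c d (mu : 'cV[R]_l) :
  A r *m v = 0 -> a + b + c + B r *m d + (A r)^T *m mu = 0 ->
  v^T *m (f2 + e1 + e3 + B r *m e4) +
    (a^T *m e2 + b^T *m f1 + c^T *m f3 + d^T *m f4) = 0.
Proof.
move=> Av0 bal; rewrite -mech_pairing.
by apply: fe_orth; exact: mech_pair_Dmech Av0 bal.
Qed.

Lemma orth_mech_forces a b c d (mu : 'cV[R]_l) :
  a + b + c + B r *m d + (A r)^T *m mu = 0 ->
  a^T *m e2 + b^T *m f1 + c^T *m f3 + d^T *m f4 = 0.
Proof.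
by move/(orth_mech_pair (mulmx0 _ _)); rewrite trmx0 mul0mx add0r.
Qed.

Lemma orth_velocities :
  [/\ f1 = e2, f3 = e2, f4 = (B r)^T *m e2 & A r *m e2 = 0].
Proof.
split.
- apply/eqP; rewrite eq_sym -subr_eq0; apply/eqP/trmx_mulmx_self_eq0.
  have := @orth_mech_forces (e2 - f1) (- (e2 - f1)) 0 0 0.
  rewrite !mulmx0 !addr0 subrr => /(_ erefl).
  by rewrite !trmx0 !mul0mx !addr0 linearN mulNmx -mulmxBr.
- apply/eqP; rewrite eq_sym -subr_eq0; apply/eqP/trmx_mulmx_self_eq0.
  have := @orth_mech_forces (e2 - f3) 0 (- (e2 - f3)) 0 0.
  rewrite !mulmx0 !addr0 subrr => /(_ erefl).
  by rewrite !trmx0 !mul0mx !addr0 linearN mulNmx -mulmxBr.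
- apply/eqP; rewrite -subr_eq0; apply/eqP/trmx_mulmx_self_eq0.
  set g := f4 - (B r)^T *m e2.
  have := @orth_mech_forces (- (B r *m g)) 0 0 g 0.
  rewrite !mulmx0 !addr0 addNr => /(_ erefl).
  rewrite !trmx0 !mul0mx !addr0 linearN /= trmx_mul mulNmx -mulmxA.
  by rewrite addrC -mulmxBr.
apply: trmx_mulmx_self_eq0.
have := @orth_mech_forces ((A r)^T *m (A r *m e2)) 0 0 0 (- (A r *m e2)).
rewrite !mulmx0 !addr0 mulmxN subrr => /(_ erefl).
by rewrite !trmx0 !mul0mx !addr0 trmx_mul trmxK -mulmxA.
Qed.

Lemma orth_balance :
  exists mu : 'cV[R]_l, f2 + e1 + e3 + B r *m e4 + (A r)^T *m mu = 0.
Proof.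
have [M MA] : exists M, (f2 + e1 + e3 + B r *m e4)^T = M *m A r.
  apply/submxP/orthogonal_ker_submx => w Aw0.
  have := @orth_mech_pair w 0 0 0 0 0 Aw0.
  by rewrite !mulmx0 !addr0 !trmx0 !mul0mx !addr0 => /(_ erefl).
by exists (- M^T); rewrite mulmxN -trmx_mul -MA trmxK subrr.
Qed.

End Orthogonal.

Lemma Dmech_maximal (f e : 'cV[R]_(n + n + n + m)) :
  (forall fh eh, Dmech A B r (fh, eh) -> fh^T *m e + f^T *m eh = 0) ->
  Dmech A B r (f, e).
Proof.
have [f1 [f2 [f3 [f4 ->]]]] := col4_split f.
have [e1 [e2 [e3 [e4 ->]]]] := col4_split e.
move=> fe_orth; have [-> -> -> Ae2] := orth_velocities fe_orth.
have [mu bal] := orth_balance fe_orth.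
exact: mech_pair_Dmech Ae2 bal.
Qed.

Lemma Dmech_Dirac : Dirac_structure (Dmech A B r).
Proof.
split=> [|f e]; first exact: Dmech_subspace.
split=> [Dfe fh eh Dfeh | ]; last exact: Dmech_maximal.
exact: (Dmech_isotropic Dfe Dfeh).
Qed.

End MechanicalDirac.

Section MechanicalSaddle.
Context {R : realType} (n m k : nat) (Ap : 'M[R]_(k, n)) (Bm : 'M[R]_(n, m)).
Local Notation N := (n + n + n + m)%N.

(* With f = (v, v + z2, v, Bm^T v) and e = f - z, the three force terms
   FLf, FLe, FR of the balance each contribute v; the rest is mech_defect z. *)
Definition mech_saddle : 'M[R]_(n + k) := saddle_mx (3%:M + Bm *m Bm^T) Ap.

Definition mech_defect : 'M[R]_(n, N) :=
  row_mx (row_mx (row_mx (- 1%:M) 1%:M) (- 1%:M)) (- Bm).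

Definition mech_vel : 'M[R]_(n, N) :=
  usubmx (invmx mech_saddle *m col_mx (- mech_defect) 0).

Definition mech_flow_mx : 'M[R]_N :=
  col4 mech_vel (mech_vel + row_mx (row_mx (row_mx 0 1%:M) 0) 0) mech_vel
    (Bm^T *m mech_vel).

Definition mech_frame (z : 'cV[R]_N) : 'cV[R]_N * 'cV[R]_N :=
  (mech_flow_mx *m z, (mech_flow_mx - 1%:M) *m z).

Lemma mech_saddle_unit : row_free Ap -> mech_saddle \in unitmx.
Proof. by apply: saddle_mx_unit; apply: posdef_scalar_add_gram. Qed.

End MechanicalSaddle.

Section MechanicalFrame.
Context {R : realType} (n m l : nat) (A : 'cV[R]_n -> 'M[R]_(l, n))
  (B : 'cV[R]_n -> 'M[R]_(n, m)) (r : 'cV[R]_n) (k : nat) (Ap : 'M[R]_(k, n)).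
Hypotheses (Ap_eq : (Ap == A r)%MS) (M_unit : mech_saddle Ap (B r) \in unitmx).

Lemma mech_frame_Dmech z : Dmech A B r (mech_frame Ap (B r) z).
Proof.
have /andP [/submxP [X ApX] /submxP [Y AY]] := Ap_eq.
have [balance ApV0] := saddle_mx_solve (- mech_defect (B r)) M_unit.
rewrite -/(mech_vel Ap (B r)) in balance ApV0.
set V := mech_vel Ap (B r) in balance ApV0 *.
set W := dsubmx _ in balance.
have [z1 [z2 [z3 [z4 ->]]]] := col4_split z; set zz := col4 z1 z2 z3 z4.
have flowE : mech_flow_mx Ap (B r) *m zz =
    col4 (V *m zz) (V *m zz + z2) (V *m zz) ((B r)^T *m (V *m zz)).
  rewrite /mech_flow_mx !mul_col_mx mulmxDl !mul_row_col.
  by rewrite !mul0mx mul1mx !addr0 add0r mulmxA.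
rewrite /mech_frame mulmxBl mul1mx flowE /zz !opp_col_mx !add_col_mx addrK.
apply: (mech_pair_Dmech (mu := X^T *m (W *m zz))).
  by rewrite mulmxA AY -(mulmxA Y) ApV0 mulmx0 mul0mx.
rewrite -[RHS](addNr (mech_defect (B r) *m zz)) -mulNmx -balance.
rewrite /mech_defect !mulmxDl mul_scalar_mx ApX trmx_mul !mul_row_col -!mulmxA.
rewrite !mulNmx !mul1mx !mulmxBr -!scalemxAl.
apply/matrixP => i j; rewrite !mxE; ring.
Qed.

Lemma Dmech_frame : lin_bij_onto (mech_frame Ap (B r)) (Dmech A B r).
Proof.
apply: lin_bij_onto_diff_section mech_frame_Dmech.
- exact: Dmech_subspace.
- exact: Dmech_isotropic.
by rewrite opprB addrC subrK.
Qed.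

End MechanicalFrame.

Section MechanicalLimits.
Context {R : realType} (n m k : nat).
Context {T : Type} (F : set_system T) {FF : Filter F}.
Context (Ap : T -> 'M[R]_(k, n)) (Bm : T -> 'M[R]_(n, m)) (A0 : 'M[R]_(k, n))
  (B0 : 'M[R]_(n, m)).
Hypotheses (Ap_A0 : Ap x @[x --> F] --> A0) (Bm_B0 : Bm x @[x --> F] --> B0).

Lemma cvg_mech_saddle :
  mech_saddle (Ap x) (Bm x) @[x --> F] --> mech_saddle A0 B0.
Proof.
apply: cvg_block_mx; [|exact: cvg_trmx|exact: Ap_A0|exact: cvg_cst].
by apply: cvgD; [exact: cvg_cst | apply: cvg_mulmx (cvg_trmx _)].
Qed.

Lemma cvg_mech_flow_mx : mech_saddle A0 B0 \in unitmx ->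
  mech_flow_mx (Ap x) (Bm x) @[x --> F] --> mech_flow_mx A0 B0.
Proof.
move=> M_unit.
have V_cvg : mech_vel (Ap x) (Bm x) @[x --> F] --> mech_vel A0 B0.
  apply: cvg_usubmx; apply: cvg_mulmx.
    exact: cvg_invmx M_unit cvg_mech_saddle.
  apply: cvg_col_mx; last exact: cvg_cst.
  apply: cvgN; apply: cvg_row_mx; [exact: cvg_cst | exact: cvgN].
apply: cvg_col_mx; last exact: cvg_mulmx (cvg_trmx _) V_cvg.
apply: cvg_col_mx => //; apply: cvg_col_mx => //.
by apply: cvgD => //; exact: cvg_cst.
Qed.

Lemma cvg_mech_frame z : mech_saddle A0 B0 \in unitmx ->
  mech_frame (Ap x) (Bm x) z @[x --> F] --> mech_frame A0 B0 z.
Proof.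
move=> M_unit; have P_cvg := cvg_mech_flow_mx M_unit.
have P1_cvg : mech_flow_mx (Ap x) (Bm x) - 1%:M @[x --> F] -->
    mech_flow_mx A0 B0 - 1%:M by exact: cvgB P_cvg (cvg_cst _).
exact: cvg_pair (cvg_mulmx P_cvg (cvg_cst z)) (cvg_mulmx P1_cvg (cvg_cst z)).
Qed.

End MechanicalLimits.

Theorem proposition1 (R : realType) (n m l : nat) (Upos : set 'cV[R]_n)
    (A : 'cV[R]_n -> 'M[R]_(l, n)) (B : 'cV[R]_n -> 'M[R]_(n, m)) :
  open Upos ->
  {within Upos, continuous A} ->
  {within Upos, continuous B} ->
  (forall r s, Upos r -> Upos s -> \rank (A r) = \rank (A s)) ->
  modulated_Dirac Upos (Dmech A B).
Proof.
move=> U_open; rewrite !continuous_open_subspace // => A_cont B_cont A_rank x Ux.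
split; first exact: Dmech_Dirac.
pose Ap y := row_base (A x) *m pinvmx (A x) *m A y.
have Ap_cont : {in Upos, continuous Ap}.
  by move=> y Uy; apply: cvg_mulmx (cvg_cst _) (A_cont y Uy).
exists [set y | Upos y /\ mech_saddle (Ap y) (B y) \in unitmx].
exists (fun y => mech_frame (Ap y) (B y)); split; last split; last split.
- apply: open_unitmx_preimage => // y Uy.
  exact: cvg_mech_saddle (Ap_cont y Uy) (B_cont y Uy).
- split=> //; apply: mech_saddle_unit.
  by rewrite /Ap mulmxKpV ?eq_row_base ?row_base_free.
- by move=> y [].
split=> [y [Uy M_unit] | z].
  have Ap_free := saddle_mx_unit_row_free M_unit.
  apply: Dmech_frame M_unit; apply: eqmx_row_free_mulmx Ap_free _.
  by rewrite (A_rank y x Uy Ux).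
apply: continuous_in_subspaceT => y; rewrite inE => -[/mem_set Uy M_unit].
exact: (cvg_mech_frame (z := z) (Ap_cont y Uy) (B_cont y Uy) M_unit).
Qed.
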